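(* Let $G$ be a finite group. Then $U(G)\le K(G)$.
   Context: For $\chi\in\mathrm{Irr}(G)$, the center of $\chi$ is $Z(\chi)=\{g\in G : |\chi(g)|=\chi(1)\}$. For a nonabelian group $G$, let $\mathcal{X}=\{\chi\in\mathrm{Irr}(G) : Z(\chi)>Z(G)\}$ (strict containment) and define $K(G)=\bigcap_{\chi\in\mathcal{X}}\ker(\chi)$; if $G$ is abelian, set $K(G)=G$. For a normal subgroup $H$ of $G$, $\mathrm{Irr}(G\mid H)$ is the set of $\chi\in\mathrm{Irr}(G)$ with $H\not\le\ker(\chi)$, and $V(G\mid H)$ is the subgroup generated by all $g\in G$ with $\chi(g)\ne0$ for some $\chi\in\mathrm{Irr}(G\mid H)$ (with $V(G\mid 1)=1$). For a normal subgroup $N$, $U(G\mid N)$ is the product of all normal subgroups $H$ of $G$ with $V(G\mid H)\le N$, and $U(G)=U(G\mid Z(G))$. *)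

From HB Require Import structures.
From mathcomp Require Import all_boot all_order all_algebra all_fingroup all_solvable all_field all_character.
Set Implicit Arguments. Unset Strict Implicit. Unset Printing Implicit Defensive.
Import GRing.Theory Num.Theory.
Local Open Scope group_scope.

(* K(G): intersection of kernels of irreducible chi with Z(chi) > Z(G);
   K(G) = G when G is abelian.  'Z(chi)%CF is MathComp's cfcenter, which for
   an irreducible character is [set g in G | `|chi g| == chi 1]. *)
Definition Kgrp (gT : finGroupType) (G : {group gT}) : {set gT} :=
  if abelian G then G
  else G :&: \bigcap_(i : Iirr G | 'Z(G) \proper 'Z(('chi_i)%R)%CF) cfker ('chi_i)%R.

Definition Vgrp (gT : finGroupType) (G H : {group gT}) : {set gT} :=
  <<[set g in G | [exists i : Iirr G,
        ~~ (H \subset cfker ('chi_i)%R) && ('chi_i g != 0)%R]]>>.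

Definition Ugrp_rel (gT : finGroupType) (G : {group gT}) (N : {set gT})
  : {set gT} :=
  <<\bigcup_(H : {group gT} | (H <| G) && (Vgrp G H \subset N)) H>>.

Definition Ugrp (gT : finGroupType) (G : {group gT}) : {set gT} :=
  Ugrp_rel G 'Z(G).

From mathcomp Require Import all_boot all_order all_algebra all_fingroup all_solvable all_field all_character.
Import GRing.Theory Num.Theory.
Local Open Scope group_scope.

(* If H is not in ker chi, then chi is one of the characters in Irr(G|H), and
   it does not vanish on its center, so Z(chi) <= V(G|H).  Hence any normal
   H with V(G|H) <= Z(G) lies in the kernel of every chi with Z(chi) > Z(G). *)

Lemma irr_cfcenter_neq0 (gT : finGroupType) (G : {group gT}) (i : Iirr G) g :
  g \in 'Z(('chi_i)%R)%CF -> ('chi_i g != 0)%R.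
Proof.
move=> Zg; have Gg := subsetP (cfcenter_sub _) g Zg.
move: Zg; rewrite irr_cfcenterE // => /eqP chi_g_norm; apply/eqP => chi_g0.
by move: (irr1_gt0 i); rewrite -chi_g_norm chi_g0 normr0 Order.POrderTheory.ltxx.
Qed.

Lemma cfcenter_sub_Vgrp (gT : finGroupType) (G H : {group gT}) (i : Iirr G) :
  ~~ (H \subset cfker ('chi_i)%R) -> 'Z(('chi_i)%R)%CF \subset Vgrp G H.
Proof.
move=> not_sHker; apply/subsetP => g Zg; apply: mem_gen.
rewrite inE (subsetP (cfcenter_sub _) g Zg) /=.
by apply/existsP; exists i; rewrite not_sHker irr_cfcenter_neq0.
Qed.

Lemma Vgrp_sub_cfker (gT : finGroupType) (G H : {group gT}) (N : {set gT})
    (i : Iirr G) :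
  Vgrp G H \subset N -> N \proper 'Z(('chi_i)%R)%CF ->
  H \subset cfker ('chi_i)%R.
Proof.
move=> sVN ltNZ; apply/negPn/negP => /cfcenter_sub_Vgrp sZV.
by move: ltNZ; rewrite properE (subset_trans sZV sVN) andbF.
Qed.

Lemma Ugrp_rel_sub (gT : finGroupType) (G : {group gT}) (N : {set gT}) :
  Ugrp_rel G N \subset G.
Proof. by rewrite gen_subG; apply/bigcupsP => H /andP[/andP[]]. Qed.

Lemma Ugrp_rel_sub_cfker (gT : finGroupType) (G : {group gT}) (N : {set gT})
    (i : Iirr G) :
  N \proper 'Z(('chi_i)%R)%CF -> Ugrp_rel G N \subset cfker ('chi_i)%R.
Proof.
move=> ltNZ; rewrite gen_subG; apply/bigcupsP => H /andP[_ sVN].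
exact: Vgrp_sub_cfker sVN ltNZ.
Qed.

Theorem lemma6p5 (gT : finGroupType) (G : {group gT}) :
  Ugrp G \subset Kgrp G.
Proof.
rewrite /Ugrp /Kgrp; case: ifP => _; first exact: Ugrp_rel_sub.
rewrite subsetI Ugrp_rel_sub /=; apply/bigcapsP => i ltZZ.
exact: Ugrp_rel_sub_cfker.
Qed.
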